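(* Let $\mathcal{R}$ be a set of records equipped with a record-merge operation $\oplus:\mathcal{R}\times\mathcal{R}\to\mathcal{R}$, and let $(\Phi,\prec)$ be the partially ordered set of execution phases described in the context. Let $\mathcal{W}$ be a wisdom library that is phase-correct, and let $p_1,\ldots,p_n\in\mathcal{W}$ ($n\ge 1$) be in valid phase order, i.e. $\phi(p_1)\prec\phi(p_2)\prec\cdots\prec\phi(p_n)$. Suppose each $p_i$ is individually correct: for all $x\in I_{p_i}$, $p_i(x)\in O_{p_i}$. Then the composed pipeline $P=p_1\mathbin{;}\cdots\mathbin{;}p_n$ is correct: for every $x\in I_{p_1}$, every intermediate input $x_i$ lies in $I_{p_i}$ (so the pipeline is well defined), and its output $P(x)=p_n(x_n)$ lies in $O_{p_n}$.
   Context: A wisdom program $p$ consists of an execution phase $\phi(p)\in\Phi$, an input schema $I_p\subseteq\mathcal{R}$, an output schema $O_p\subseteq\mathcal{R}$, and a function (its denotation) $x\mapsto p(x)$ defined on $I_p$ with values in $\mathcal{R}$. A wisdom library $\mathcal{W}$ is a finite set of wisdom programs. The phase set is $\Phi=\{\mathsf{pre},\mathsf{ctx},\mathsf{post},\mathsf{auto},\mathsf{render},\mathsf{rel},\mathsf{agg},\mathsf{idx}\}$, partially ordered by the order $\prec$ generated by $\mathsf{pre}\prec\mathsf{ctx}\prec\mathsf{agg}\prec\mathsf{post}\prec\mathsf{render}$, $\mathsf{rel}\prec\mathsf{agg}$, $\mathsf{post}\prec\mathsf{auto}$, with $\mathsf{idx}$ incomparable to all others. Sequential composition $p\mathbin{;}q$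 (for $\phi(p)\prec\phi(q)$) runs $p$ on input $x$ and then runs $q$ on the merged input $x\oplus p(x)$; here $\oplus$ is schema-compatible record merge (fields of $x$ are preserved and fields of $p(x)$ are added). Accordingly, the pipeline $p_1\mathbin{;}\cdots\mathbin{;}p_n$ on input $x$ is defined by $x_1=x$, $x_{i+1}=x_i\oplus p_i(x_i)$ for $1\le i<n$, with output $p_n(x_n)$. A wisdom library $\mathcal{W}$ is phase-correct if: (a) for every $p,q\in\mathcal{W}$ with $\phi(p)\prec\phi(q)$ and every $x\in I_p$, one has $x\oplus p(x)\in I_q$; (b) the aggregation program (phase $\mathsf{agg}$) accepts as input the union of all outputs of programs with phase $\prec\mathsf{agg}$; and (c) the rendering programs (phase $\mathsf{render}$) accept the output of the aggregation program as input. *)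

From Stdlib Require Import List Relations.
Import ListNotations.
Set Implicit Arguments.

Inductive phase : Type := pre | ctx | post | auto | render | rel | agg | idx.

Inductive phase_gen : phase -> phase -> Prop :=
| g_pre_ctx : phase_gen pre ctx
| g_ctx_agg : phase_gen ctx agg
| g_agg_post : phase_gen agg post
| g_post_render : phase_gen post render
| g_rel_agg : phase_gen rel agg
| g_post_auto : phase_gen post auto.

Definition phase_lt : phase -> phase -> Prop := clos_trans phase phase_gen.

Record wprog (R : Type) : Type := WProg {
  wphase : phase;
  winp : R -> Prop;
  wout : R -> Prop;
  wfun : R -> R       (* denotation; only meaningful on I_p *)
}.

Definition library (R : Type) := list (wprog R).

Section Defs.
Variable R : Type.
Variable merge : R -> R -> R.

Definition phase_correct (W : library R) : Prop :=
  (forall p q, In p W -> In q W -> phase_lt (wphase p) (wphase q) ->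
     forall x, winp p x -> winp q (merge x (wfun p x))) /\
  (forall a p, In a W -> wphase a = agg -> In p W -> phase_lt (wphase p) agg ->
     forall y, wout p y -> winp a y) /\
  (forall a r, In a W -> wphase a = agg -> In r W -> wphase r = render ->
     forall y, wout a y -> winp r y).

Fixpoint phase_chain (ps : list (wprog R)) : Prop :=
  match ps with
  | p :: ((q :: _) as ps') => phase_lt (wphase p) (wphase q) /\ phase_chain ps'
  | _ => True
  end.

Fixpoint pipeline_inputs (x : R) (ps : list (wprog R)) : list R :=
  match ps with
  | [] => []
  | p :: ps' => x :: pipeline_inputs (merge x (wfun p x)) ps'
  end.

Fixpoint pipeline_output (x : R) (p : wprog R) (ps : list (wprog R)) : R :=
  match ps with
  | [] => wfun p x
  | q :: qs => pipeline_output (merge x (wfun p x)) q qs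
  end.
End Defs.

(** Condition (a) of phase-correctness says exactly that each stage of a
    phase-ordered pipeline hands a well-typed input to the next one, so by
    induction along the pipeline every intermediate input [x_i] lies in
    [I_{p_i}]; the output is then correct because the last program is. *)

From Stdlib Require Import List.

Lemma last_cons_cons (A : Type) (p q : A) (qs : list A) :
  last (q :: qs) p = last qs q.
Proof.
  revert p q. induction qs as [|r rs IH]; intros p q; [reflexivity|].
  change (last (r :: rs) p = last (r :: rs) q). now rewrite !IH.
Qed.

Lemma in_last_cons (A : Type) (d : A) (l : list A) : In (last l d) (d :: l).
Proof.
  revert d. induction l as [|a l IH]; intros d; [now left|].
  rewrite last_cons_cons. right. apply IH.
Qed.

Section Pipeline.

Variables (R : Type) (merge : R -> R -> R) (W : library R).

Hypothesis merge_input_correct :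
  forall p q, In p W -> In q W -> phase_lt (wphase p) (wphase q) ->
  forall x, winp p x -> winp q (merge x (wfun p x)).

Lemma pipeline_inputs_correct (ps : list (wprog R)) :
  forall p x, incl (p :: ps) W -> phase_chain (p :: ps) -> winp p x ->
  Forall2 (fun q y => winp q y) (p :: ps) (pipeline_inputs merge x (p :: ps)).
Proof.
  induction ps as [|q qs IH]; intros p x HW Hchain Hx.
  - now constructor.
  - destruct Hchain as [Hpq Hchain].
    constructor; [exact Hx|].
    apply IH; [exact (proj2 (incl_cons_inv HW)) | exact Hchain |].
    apply (merge_input_correct p q); auto with datatypes.
Qed.

Lemma pipeline_output_correct (ps : list (wprog R)) :
  forall p x, incl (p :: ps) W -> phase_chain (p :: ps) -> winp p x ->
  (forall y, winp (last ps p) y -> wout (last ps p) (wfun (last ps p) y)) ->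
  wout (last ps p) (pipeline_output merge x p ps).
Proof.
  induction ps as [|q qs IH]; intros p x HW Hchain Hx Hlast.
  - now apply Hlast.
  - destruct Hchain as [Hpq Hchain].
    rewrite last_cons_cons in *.
    apply IH; [exact (proj2 (incl_cons_inv HW)) | exact Hchain | | exact Hlast].
    apply (merge_input_correct p q); auto with datatypes.
Qed.

End Pipeline.

Theorem theorem4p2 (R : Type) (merge : R -> R -> R) (W : library R)
  (p1 : wprog R) (ps : list (wprog R)) :
  phase_correct merge W ->
  (forall p, In p (p1 :: ps) -> In p W) ->
  phase_chain (p1 :: ps) ->
  (forall p, In p (p1 :: ps) -> forall x, winp p x -> wout p (wfun p x)) ->
  forall x, winp p1 x ->
    Forall2 (fun p y => winp p y) (p1 :: ps) (pipeline_inputs merge x (p1 :: ps)) /\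
    wout (last ps p1) (pipeline_output merge x p1 ps).
Proof.
  intros [merge_input_correct _] HW Hchain Hcorrect x Hx.
  split.
  - now apply (pipeline_inputs_correct _ merge W).
  - apply (pipeline_output_correct _ merge W); try assumption.
    apply Hcorrect, in_last_cons.
Qed.
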